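(* Let $P\subset\mathbb{Z}^2_{\ge0}$ be a B-polytope. Then, after possibly interchanging the two coordinates, one of the following holds: (1) ($B_1$-polytope) exactly one point of $P$ has nonzero second coordinate, this point is $(a,1)$ for some integer $a\ge0$, and $P$ contains at least two points with second coordinate $0$; (2) (border polytope) $P=\{(0,1),(1,1)\}\cup S\cup T$, where $S$ is a nonempty subset of $\{(c,0): c\in\mathbb{Z},\ c\ge1\}$ and $T\subseteq\{(0,0)\}$.
   Context: A $k$-simplex is a set of $k+1$ affinely independent points; a $k$-simplex $S\subset\mathbb{Z}^m_{\ge0}$ is a B-simplex if there is an index $i$ with exactly $k$ vertices in $\{x_i=0\}$ and the remaining vertex having $x_i=1$ (for $k=0$: the point has some coordinate equal to $1$). A B-polytope in $\mathbb{Z}^m_{\ge0}$ is a finite set $P\subset\mathbb{Z}^m_{\ge0}$ whose affine span has dimension $m$ such that every $(m-1)$-simplex with vertices in $P$ either is a B-simplex or has affine span containing the origin. (For $m=2$: every segment joining two distinct points of $P$ either is a B-simplex or lies on a line through the origin.) *)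

From mathcomp Require Import all_boot.

Set Implicit Arguments. Unset Strict Implicit. Unset Printing Implicit Defensive.

Definition pt := (nat * nat)%type.

(* A 1-simplex {p, q} (p <> q) in Z^2_{>=0} is a B-simplex iff for some
   coordinate i, exactly one of p, q has x_i = 0 and the other has x_i = 1. *)
Definition coord (i : bool) (p : pt) : nat := if i then p.2 else p.1.

Definition B_segment (p q : pt) : Prop :=
  exists i : bool,
    (coord i p = 0 /\ coord i q = 1) \/ (coord i q = 0 /\ coord i p = 1).

(* The line through distinct p, q contains the origin iff det(p, q) = 0. *)
Definition line_through_origin (p q : pt) : Prop := p.1 * q.2 = p.2 * q.1.

Definition affinely_full (P : seq pt) : Prop :=
  exists a b c, [/\ a \in P, b \in P, c \in P &
    (* twice the signed area of triangle abc is nonzero, written over nat *)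
    a.1 * b.2 + b.1 * c.2 + c.1 * a.2 != a.2 * b.1 + b.2 * c.1 + c.2 * a.1].

Definition B_polytope2 (P : seq pt) : Prop :=
  affinely_full P /\
  forall p q, p \in P -> q \in P -> p <> q ->
    B_segment p q \/ line_through_origin p q.

Definition swapP (P : seq pt) : seq pt := map (fun p => (p.2, p.1)) P.

Definition B1_polytope (P : seq pt) : Prop :=
  (exists a : nat, (a, 1) \in P /\ forall p, p \in P -> p.2 != 0 -> p = (a, 1)) /\
  (exists p q, [/\ p \in P, q \in P, p != q, p.2 = 0 & q.2 = 0]).

Definition border_polytope (P : seq pt) : Prop :=
  exists S T : seq pt,
    [/\ S != [::], (forall s, s \in S -> s.2 = 0 /\ 1 <= s.1),
        (forall t, t \in T -> t = (0, 0)) &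
        P =i [:: (0, 1); (1, 1)] ++ S ++ T].

From mathcomp Require Import all_boot zify.

Set Implicit Arguments.
Unset Strict Implicit.
Unset Printing Implicit Defensive.

(* A segment is a B-simplex only when one coordinate takes the values 0 and 1
   at its two ends.  A point with both coordinates at least 2 therefore lies on
   a line through the origin with every other point, which contradicts full
   dimension; for the same reason points high above the x-axis and points far
   from the y-axis cannot coexist, so after a swap all points lie on the rows
   y = 0 and y = 1.  Two distinct points of the row y = 1 must be (0,1) and
   (1,1).  If that row is a single point, P is a B_1-polytope; otherwise P is a
   border polytope, unless its row y = 0 is {(0,0)}, in which case the swapped
   polytope is a B_1-polytope. *)

Lemma cross_eq_trans (p1 p2 a1 a2 b1 b2 : nat) : 0 < p1 ->
  p1 * a2 = p2 * a1 -> p1 * b2 = p2 * b1 -> a1 * b2 = a2 * b1.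
Proof. by nia. Qed.

Section AffinelyFull.

Variable P : seq pt.
Hypothesis fullP : affinely_full P.

Lemma affinely_full_not_sub2 u v : ~ {subset P <= [:: u; v]}.
Proof.
case: fullP => a [b [c [Pa Pb Pc det_abc]]] sub; move: det_abc.
move: (sub a Pa) (sub b Pb) (sub c Pc); rewrite !inE.
by do 3![case/orP=> /eqP->]; move/eqP; apply; lia.
Qed.

Lemma affinely_full_out2 u v : exists2 w, w \in P & w \notin [:: u; v].
Proof.
apply/hasP; rewrite has_predC; apply/negP => /allP.
exact: affinely_full_not_sub2.
Qed.

Lemma affinely_full_off_row k : exists2 w, w \in P & w.2 != k.
Proof.
apply/hasP; rewrite has_predC; apply/negP => /allP row_k.
case: fullP => a [b [c [Pa Pb Pc]]].
rewrite (eqP (row_k a Pa)) (eqP (row_k b Pb)) (eqP (row_k c Pc)).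
by move/eqP; apply; lia.
Qed.

Lemma affinely_full_not_radial p :
  0 < p.1 -> ~ (forall q, q \in P -> line_through_origin p q).
Proof.
move=> p1_gt0 radial; case: fullP => a [b [c [Pa Pb Pc]]].
move: (radial a Pa) (radial b Pb) (radial c Pc); rewrite /line_through_origin.
move=> pa pb pc /eqP; apply.
rewrite (cross_eq_trans p1_gt0 pa pb) (cross_eq_trans p1_gt0 pb pc).
by rewrite (cross_eq_trans p1_gt0 pc pa).
Qed.

End AffinelyFull.

Lemma mem_swapP P p : (p \in swapP P) = ((p.2, p.1) \in P).
Proof.
case: p => x y; apply/mapP/idP => [[[x' y'] Pq [-> ->]] // | Pyx].
by exists (y, x).
Qed.

Lemma swapPK P : swapP (swapP P) = P.
Proof. by elim: P => //= [[x y] s] ->. Qed.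

Lemma B_polytope2_swap P : B_polytope2 P -> B_polytope2 (swapP P).
Proof.
move=> [[[a1 a2] [[b1 b2] [[c1 c2] [Pa Pb Pc det_abc]]]] BP]; split.
  exists (a2, a1), (b2, b1), (c2, c1); rewrite !mem_swapP.
  by split=> //; apply: contra_neq det_abc => /=; lia.
move=> [x y] [x' y']; rewrite !mem_swapP => Pp Pq pq.
have qp : (y, x) <> (y', x') by move=> [eq_y eq_x]; apply: pq; rewrite eq_x eq_y.
case: (BP _ _ Pp Pq qp) => [[i seg] | orig]; last first.
  by right; move: orig; rewrite /line_through_origin /=; lia.
by left; exists (~~ i); case: i seg.
Qed.

Section BPolytope.

Variable P : seq pt.
Hypothesis BP : B_polytope2 P.

Let fullP : affinely_full P := BP.1.

Lemma B_polytope2_pair p q : p \in P -> q \in P -> p <> q ->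
  [\/ p.1 + q.1 = 1, p.2 + q.2 = 1 | p.1 * q.2 = p.2 * q.1].
Proof.
move=> Pp Pq pq; case: (BP.2 p q Pp Pq pq) => [[[] /= seg] | orig].
- by apply: Or32; lia.
- by apply: Or31; lia.
- exact: Or33.
Qed.

Lemma B_polytope2_small_coord p : p \in P -> p.1 <= 1 \/ p.2 <= 1.
Proof.
move=> Pp; case: (leqP p.1 1) => [|p1_big]; first by left.
case: (leqP p.2 1) => [|p2_big]; first by right.
case: (affinely_full_not_radial fullP (ltnW p1_big)) => q Pq.
case: (eqVneq p q) => [<-|/eqP pq]; first by rewrite /line_through_origin mulnC.
by case: (B_polytope2_pair Pp Pq pq) => //; lia.
Qed.

Lemma B_polytope2_flat :
  (forall p, p \in P -> p.2 <= 1) \/ (forall p, p \in P -> p.1 <= 1).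
Proof.
have [/hasP[[x y] Pp /= y_big] | /hasPn low] := boolP (has (fun p => 1 < p.2) P);
  last by left=> q /low; rewrite -leqNgt.
right=> -[x' y'] Pq; rewrite leqNgt; apply/negP => /= x'_big.
have x_small : x <= 1 by case: (B_polytope2_small_coord Pp) => /=; lia.
have y'_small : y' <= 1 by case: (B_polytope2_small_coord Pq) => /=; lia.
have pq : (x, y) <> (x', y') by case=> eq_x; lia.
by case: (B_polytope2_pair Pp Pq pq) => /=; nia.
Qed.

Lemma B_polytope2_row1 p q : p \in P -> q \in P ->
  p.2 = 1 -> q.2 = 1 -> p <> q -> p.1 + q.1 = 1.
Proof.
case: p q => [x y] [x' y'] Pp Pq /= y1 y'1 pq.
rewrite {}y1 {}y'1 in Pp Pq pq *.
case: (B_polytope2_pair Pp Pq pq) => //=.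
by rewrite muln1 mul1n => eq_x; case: pq; rewrite eq_x.
Qed.

Hypothesis low : forall p, p \in P -> p.2 <= 1.

Lemma B_polytope2_single_top_B1 :
  (forall p q, p \in P -> q \in P -> p.2 = 1 -> q.2 = 1 -> p = q) ->
  B1_polytope P.
Proof.
move=> top_uniq.
have [[a y] Pa /= y_ne0] := affinely_full_off_row fullP 0.
have y1 : y = 1 by have := low Pa; rewrite /= in y_ne0 *; lia.
rewrite {}y1 {y_ne0} in Pa.
have row0 w : w \in P -> w != (a, 1) -> w.2 = 0.
  move=> Pw; apply: contraNeq => w2_ne0; apply/eqP/top_uniq => //.
  by have := low Pw; lia.
split.
  exists a; split=> // p Pp p2_ne0.
  by apply: top_uniq => //; have := low Pp; lia.
have [u Pu] := affinely_full_out2 fullP (a, 1) (a, 1).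
rewrite !inE orbb => u_ne.
have [v Pv] := affinely_full_out2 fullP u (a, 1).
rewrite !inE negb_or => /andP[v_ne_u v_ne].
by exists u, v; split; [| | rewrite eq_sym | exact: row0 | exact: row0].
Qed.

Lemma B_polytope2_double_top : (0, 1) \in P -> (1, 1) \in P ->
  border_polytope P \/ B1_polytope (swapP P).
Proof.
move=> P01 P11.
have top w : w \in P -> w.2 = 1 -> w = (0, 1) \/ w = (1, 1).
  case: w => x y Pw /= y1; rewrite y1 in Pw *.
  case: (eqVneq (x, 1) (0, 1)) => [|/eqP ne]; first by left.
  by right; have := B_polytope2_row1 Pw P01 erefl erefl ne; rewrite /= addn0 => ->.
pose bottom (s : pt) := (s.2 == 0) && (0 < s.1).
have [/hasP[s Ps bot_s] | /hasPn no_bottom] := boolP (has bottom P).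
  left; exists [seq s <- P | bottom s], [seq t <- P | t == (0, 0)]; split.
  - by apply/eqP => no_s; have := mem_filter bottom s P; rewrite no_s bot_s Ps.
  - by move=> t; rewrite mem_filter => /andP[/andP[/eqP -> ->]].
  - by move=> t; rewrite mem_filter => /andP[/eqP].
  move=> [x y]; rewrite !mem_cat !mem_filter !inE /bottom /=.
  apply/idP/idP => [Pw | /or3P[/orP[]/eqP[-> ->] | /andP[_ ->] | /andP[_ ->]] //].
  have [y1 | y_ne1] := eqVneq y 1; first by case: (top _ Pw y1) => -[-> ->].
  have y0 : y = 0 by have := low Pw; rewrite /= in y_ne1 *; lia.
  by rewrite Pw y0 !andbT; case: x {Pw} => [|n]; rewrite ?eqxx ?orbT.
right; have sub w : w \in P -> w \in [:: (0, 1); (1, 1); (0, 0)].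
  case: w => x y Pw; have [y1 | y_ne1] := eqVneq y 1.
    by case: (top _ Pw y1) => ->; rewrite !inE eqxx ?orbT.
  have := low Pw; have := no_bottom _ Pw; rewrite /bottom /= in y_ne1 *.
  by move=> x0 y0; have -> : (x, y) = (0, 0) by congr pair; lia.
have P00 : (0, 0) \in P.
  have [w Pw] := affinely_full_out2 fullP (0, 1) (1, 1).
  move: (sub w Pw); rewrite !inE.
  by case/or3P=> [/eqP->|/eqP->|/eqP<-]; rewrite ?eqxx ?orbT.
split.
  exists 1; split=> [|[x y]]; rewrite mem_swapP // => /sub.
  by rewrite !inE => /or3P[/eqP[-> ->]|/eqP[-> ->]|/eqP[-> ->]].
by exists (1, 0), (0, 0); rewrite !mem_swapP.
Qed.

Lemma B_polytope2_low_cases :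
  B1_polytope P \/ border_polytope P \/ B1_polytope (swapP P).
Proof.
have [/andP[P01 P11] | not_both] := boolP (((0, 1) \in P) && ((1, 1) \in P)).
  by case: (B_polytope2_double_top P01 P11); auto.
left; apply: B_polytope2_single_top_B1 => [[x y] [x' y']] Pp Pq /= y1 y'1.
move: Pp Pq; rewrite {}y1 {}y'1 => Pp Pq.
case: (eqVneq (x, 1) (x', 1)) => [// | /eqP pq]; case/negP: not_both.
have := B_polytope2_row1 Pp Pq erefl erefl pq; move: Pp Pq => /=.
by case: x x' {pq} => [|[|?]] [|[|?]] //= -> ->.
Qed.

End BPolytope.

Theorem lemma3p4 (P : seq pt) :
  B_polytope2 P ->
  exists Q : seq pt, (Q = P \/ Q = swapP P) /\ (B1_polytope Q \/ border_polytope Q).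
Proof.
move=> BP; case: (B_polytope2_flat BP) => [low | low_swap].
  case: (B_polytope2_low_cases BP low) => [B1 | [border | B1]].
  - by exists P; auto.
  - by exists P; auto.
  - by exists (swapP P); auto.
have BS := B_polytope2_swap BP.
have low : forall p, p \in swapP P -> p.2 <= 1.
  by move=> [x y]; rewrite mem_swapP => /low_swap.
case: (B_polytope2_low_cases BS low) => [B1 | [border | B1]].
- by exists (swapP P); auto.
- by exists (swapP P); auto.
- by exists P; rewrite swapPK in B1; auto.
Qed.
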